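(* Let $X=(X_1,\dots,X_d)$ be a Gaussian random field on $\mathbb{R}^n$ with $X_1,\dots,X_d$ independent, centered, with almost surely continuous sample paths, let $f\colon\mathbb{R}^n\to\mathbb{R}^d$ be Borel, let $A\subset\mathbb{R}^n$ be an analytic set on which $X$ is regular, and let $\mu\in\mathcal{P}_c(A)$. Then $$\dim_{P,X+f}\mu=\sup\Big\{\gamma:\ \liminf_{r\to0+}r^{-\gamma}\int_{\mathbb{R}^n}H_X^f(t,s,r)\,d\mu(s)=0\text{ for }\mu\text{-a.e. }t\in\mathbb{R}^n\Big\},$$ $$\dim_{P,(X+f)^*}\mu=\sup\Big\{\gamma:\ \liminf_{r\to0+}r^{-\gamma}\int_{D(t,r)}H_X^f(t,s,r)\,d\mu(s)=0\text{ for }\mu\text{-a.e. }t\in\mathbb{R}^n\Big\}.$$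
   Context: $\|\cdot\|$ denotes the maximum norm, $D(t,r)$ the closed max-norm ball in $\mathbb{R}^n$. $\rho_i(t,s)=\sqrt{\mathbb{E}(X_i(t)-X_i(s))^2}$; $N$ is a standard normal variable; $f_i$ is the $i$th coordinate of $f$. $H_X^f(t,s,r)=\mathbb{P}(\|(X+f)(t)-(X+f)(s)\|\le r)=\prod_{i=1}^d\mathbb{P}(\rho_i(t,s)N\in B(f_i(t)-f_i(s),r))$. $h^*(t)=(t,h(t))$. $\mathcal{P}_c(A)$: Borel probability measures with compact support in $A$; $\mu_Z=\mu\circ Z^{-1}$. For a jointly measurable random map $Z$, $\dim_{P,Z}\mu=\sup\{\gamma: \liminf_{r\to0+}r^{-\gamma}\mathbb{E}(\mu_Z(B(Z(t),r)))=0 \text{ for }\mu\text{-a.e. } t\}$ with $B$ the closed Euclidean ball. $X$ is regular on $A$ if $A=\bigcup_k A_k$ where for all $k,N\in\mathbb{N}^+$ there is $c>0$ with $\rho_i(t,s)\le c\log^{-N}(1/|t-s|)$ for $t,s\in A_k$, $1\le i\le d$. *)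

From HB Require Import structures.
From mathcomp Require Import all_boot all_order all_algebra.
From mathcomp Require Import all_classical all_reals all_analysis.
Set Implicit Arguments. Unset Strict Implicit. Unset Printing Implicit Defensive.
Import Order.TTheory GRing.Theory Num.Theory.
Import numFieldNormedType.Exports.
Local Open Scope classical_set_scope.
Local Open Scope ring_scope.

(** R^n with its Borel sigma-algebra (generated by the open sets of 'rV[R]_n,
    whose norm is the max norm [mx_norm]).  The carrier is 'rV[R]_n. *)
Definition Rn (R : realType) (n : nat) := g_sigma_algebraType (@open 'rV[R]_n).

Definition normal_law {dO} {O : measurableType dO} {R : realType}
  (P : probability O R) (Y : O -> R) (m s : R) : Prop :=
  measurable_fun setT Y /\ 0 <= s /\
  forall B : set R, measurable B ->
    P (Y @^-1` B) = (if s == 0 then \d_m B else normal_prob m s B).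

Definition gaussian_field {dO} {O : measurableType dO} {R : realType} {n d : nat}
  (P : probability O R) (X : 'I_d -> Rn R n -> O -> R) : Prop :=
  forall s : seq ('I_d * Rn R n * R), exists m sd : R,
    normal_law P (fun w => \sum_(p <- s) p.2 * X p.1.1 p.1.2 w) m sd.

Definition centered_field {dO} {O : measurableType dO} {R : realType} {n d : nat}
  (P : probability O R) (X : 'I_d -> Rn R n -> O -> R) : Prop :=
  forall i t, (\int[P]_w (X i t w)%:E = 0)%E.

Definition proc_sigma {dO} {O : measurableType dO} {R : realType} {n : nat}
  (Y : Rn R n -> O -> R) : set (set O) :=
  <<s [set E | exists (t : Rn R n) (B : set R), measurable B /\ E = Y t @^-1` B] >>.

Definition indep_coords {dO} {O : measurableType dO} {R : realType} {n d : nat}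
  (P : probability O R) (X : 'I_d -> Rn R n -> O -> R) : Prop :=
  forall E : 'I_d -> set O, (forall i, proc_sigma (X i) (E i)) ->
    P (\bigcap_(i in [set: 'I_d]) E i) = (\prod_(i < d) P (E i))%E.

Definition as_continuous {dO} {O : measurableType dO} {R : realType} {n d : nat}
  (P : probability O R) (X : 'I_d -> Rn R n -> O -> R) : Prop :=
  {ae P, forall w, forall i, continuous (fun t : 'rV[R]_n => X i t w)}.

Definition borel_map {R : realType} {n d : nat} (f : Rn R n -> 'rV[R]_d) : Prop :=
  forall i : 'I_d, measurable_fun setT (fun t : Rn R n => f t 0 i).

Definition rho {dO} {O : measurableType dO} {R : realType} {n d : nat}
  (P : probability O R) (X : 'I_d -> Rn R n -> O -> R) (i : 'I_d) (t s : Rn R n) : R :=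
  Num.sqrt (fine (\int[P]_w ((X i t w - X i s w) ^+ 2)%:E)%E).

Definition Xf {O : Type} {R : realType} {n d : nat}
  (X : 'I_d -> Rn R n -> O -> R) (f : Rn R n -> 'rV[R]_d) : Rn R n -> O -> 'rV[R]_d :=
  fun t w => \row_i (X i t w + f t 0 i).

Definition graphXf {O : Type} {R : realType} {n d : nat}
  (X : 'I_d -> Rn R n -> O -> R) (f : Rn R n -> 'rV[R]_d) : Rn R n -> O -> 'rV[R]_(n + d) :=
  fun t w => row_mx (t : 'rV[R]_n) (Xf X f t w).

Definition HXf {dO} {O : measurableType dO} {R : realType} {n d : nat}
  (P : probability O R) (X : 'I_d -> Rn R n -> O -> R) (f : Rn R n -> 'rV[R]_d)
  (t s : Rn R n) (r : R) : R :=
  fine (P [set w | `|Xf X f t w - Xf X f s w| <= r]).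

Definition Dball {R : realType} {n : nat} (t : Rn R n) (r : R) : set (Rn R n) :=
  [set s : Rn R n | `|(s : 'rV[R]_n) - t| <= r].

Definition eucl_dist {R : realType} {m : nat} (u v : 'rV[R]_m) : R :=
  Num.sqrt (\sum_(j < m) (u 0 j - v 0 j) ^+ 2).

Definition dimP {dO} {O : measurableType dO} {R : realType} {n m : nat}
  (P : probability O R) (mu : probability (Rn R n) R) (Z : Rn R n -> O -> 'rV[R]_m)
  : \bar R :=
  ereal_sup [set g%:E | g in [set g : R |
    {ae mu, forall t, limf_einf (fun r : R =>
        ((r `^ (- g))%:E *
         \int[P]_w mu [set s | (eucl_dist (Z s w) (Z t w) <= r)%R])%E) (0^'+) = 0%E}]].

Definition dimH {dO} {O : measurableType dO} {R : realType} {n d : nat}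
  (P : probability O R) (X : 'I_d -> Rn R n -> O -> R) (f : Rn R n -> 'rV[R]_d)
  (mu : probability (Rn R n) R) (D : Rn R n -> R -> set (Rn R n)) : \bar R :=
  ereal_sup [set g%:E | g in [set g : R |
    {ae mu, forall t, limf_einf (fun r : R =>
        ((r `^ (- g))%:E *
         \int[mu]_(s in D t r) (HXf P X f t s r)%:E)%E) (0^'+) = 0%E}]].

(** Analytic subsets of R^n: empty, or continuous images of Baire space N^N. *)
Definition analytic_set {R : realType} {n : nat} (A : set (Rn R n)) : Prop :=
  A = set0 \/ exists g : prod_topology (fun _ : nat => nat) -> 'rV[R]_n,
    continuous g /\ range g = A.

Definition regular_on {dO} {O : measurableType dO} {R : realType} {n d : nat}
  (P : probability O R) (X : 'I_d -> Rn R n -> O -> R) (A : set (Rn R n)) : Prop :=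
  exists Ak : nat -> set (Rn R n), A = \bigcup_k Ak k /\
    forall k N : nat, exists c : R, 0 < c /\
      forall (t s : Rn R n) (i : 'I_d), Ak k t -> Ak k s ->
        0 < `|(t : 'rV[R]_n) - s| < 1 ->
        rho P X i t s <= c * (ln (`|(t : 'rV[R]_n) - s|^-1)) ^- N.+1.

Definition msupport {R : realType} {n : nat} (mu : probability (Rn R n) R) : set 'rV[R]_n :=
  [set t | forall U : set 'rV[R]_n, open U -> U t -> (0 < mu U)%E].

Definition in_Pc {R : realType} {n : nat} (A : set (Rn R n)) (mu : probability (Rn R n) R) : Prop :=
  compact (msupport mu) /\ msupport mu `<=` A.

From HB Require Import structures.
From mathcomp Require Import all_boot all_order all_algebra.
From mathcomp Require Import all_classical all_reals all_analysis.
From mathcomp Require Import lra measurable_realfun.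
Import Order.TTheory GRing.Theory Num.Theory.
Import numFieldNormedType.Exports.
Local Open Scope classical_set_scope.
Local Open Scope ring_scope.

(* By Tonelli, E mu_Z(B(Z(t),r)) = int P(|Z(s) - Z(t)|_2 <= r) dmu(s).  In R^m
   the Euclidean ball of radius r lies between the max-norm balls of radii r/m
   and r, and rescaling the radius by a constant does not change whether
   r^-g phi(r) has liminf 0 at 0+.  So both dimensions can be computed with the
   max norm, where P(|(X+f)(t) - (X+f)(s)| <= r) is H_X^f(t,s,r) and, for the
   graph, H_X^f(t,s,r) restricted to s in D(t,r).  Tonelli needs a jointly
   measurable integrand: X is replaced by a modification that is continuous on
   every path, hence jointly measurable (Caratheodory), and that differs from X
   only on a P-null set. *)

Section rV_max_norm.
Context {R : realType}.

Lemma rV_norm_entry_le {m} (x : 'rV[R]_m) j : `|x 0 j| <= `|x|.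
Proof.
rewrite [leRHS]/Num.Def.normr /= mx_normrE; apply/bigmax_geP; right => /=.
by exists (0, j).
Qed.

Lemma rV_norm_leP {m} (x : 'rV[R]_m) e : 0 <= e ->
  `|x| <= e <-> forall j, `|x 0 j| <= e.
Proof.
move=> e0; split => [xe j|xe]; first exact: le_trans (rV_norm_entry_le x j) xe.
rewrite [leLHS]/Num.Def.normr /= mx_normrE; apply/bigmax_leP.
by split => // -[i j] _ /=; rewrite (ord1 i).
Qed.

Lemma rV_norm_lt {m} (x : 'rV[R]_m) e : 0 < e ->
  (forall j, `|x 0 j| < e) -> `|x| < e.
Proof.
move=> e0 xe; rewrite [ltLHS]/Num.Def.normr /= mx_normrE; apply/bigmax_ltP.
by split => // -[i j] _ /=; rewrite (ord1 i).
Qed.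

Lemma row_mx_norm_leP {m1 m2} (a : 'rV[R]_m1) (b : 'rV[R]_m2) e : 0 <= e ->
  `|row_mx a b| <= e <-> `|a| <= e /\ `|b| <= e.
Proof.
move=> e0; rewrite !rV_norm_leP//; split.
  by move=> abe; split => j; [have := abe (lshift m2 j)|have := abe (rshift m1 j)];
    rewrite ?row_mxEl ?row_mxEr.
move=> [ae be] j; rewrite -(splitK j).
by case: (fintype.split j) => k /=; rewrite ?row_mxEl ?row_mxEr.
Qed.

Lemma rV_norm_le_eucl_dist {m} (u v : 'rV[R]_m) : `|u - v| <= eucl_dist u v.
Proof.
apply/rV_norm_leP => [|j]; first exact: sqrtr_ge0.
rewrite !mxE -sqrtr_sqr ler_sqrt; last by apply: sumr_ge0 => i _; exact: sqr_ge0.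
by rewrite (bigD1 j) //= lerDl; apply: sumr_ge0 => i _; exact: sqr_ge0.
Qed.

Lemma eucl_dist_le_rV_norm {m} (u v : 'rV[R]_m) : (0 < m)%N ->
  eucl_dist u v <= m%:R * `|u - v|.
Proof.
move=> m0; rewrite /eucl_dist -[leRHS]ger0_norm ?mulr_ge0 // -sqrtr_sqr.
rewrite ler_sqrt; last exact: sqr_ge0.
apply: (@le_trans _ _ (\sum_(j < m) `|u - v| ^+ 2)).
  apply: ler_sum => j _; rewrite -real_normK ?num_real//.
  have := rV_norm_entry_le (u - v) j; rewrite !mxE => uvj.
  by rewrite !expr2; apply: ler_pM.
rewrite sumr_const card_ord exprMn -[in leLHS]mulr_natl ler_wpM2r ?sqr_ge0//.
by rewrite expr2 ler_peMl// ?ler0n// ler1n.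
Qed.

End rV_max_norm.

Section liminf_at_0.
Context {R : realType}.
Local Open Scope ereal_scope.

Lemma limf_einf_at0_eq0P (phi : R -> \bar R) :
  (forall r, (0 < r)%R -> 0 <= phi r) ->
  limf_einf phi (0%R^'+) = 0 <->
  forall e dl : R, (0 < e)%R -> (0 < dl)%R ->
    exists2 r, (0 < r < dl)%R & phi r <= e%:E.
Proof.
move=> phi0; rewrite limf_einfE.
have near0 (dl : R) : (0 < dl)%R -> \forall r \near 0%R^'+, (0 < r < dl)%R.
  move=> dl0; near=> r; apply/andP; split; near: r;
    [exact: nbhs_right_gt|exact: nbhs_right_lt].
split => [sup0 e dl e0 dl0|small].
  have : ereal_inf (phi @` [set r : R | (0 < r < dl)%R]) < e%:E.
    apply: (@le_lt_trans _ _ 0); last by rewrite lte_fin.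
    rewrite -sup0; apply: ereal_sup_ubound.
    by exists [set r : R | (0 < r < dl)%R] => //; exact: near0.
  by move=> /ereal_inf_lt[_ [r rdl <-] /ltW]; exists r.
apply/eqP; rewrite eq_le; apply/andP; split.
  apply: ge_ereal_sup => _ [V FV <-]; apply/lee_addgt0Pr => e e0; rewrite add0e.
  have [dl dl0 dlV] : exists2 dl : R, (0 < dl)%R & forall r, (0 < r < dl)%R -> V r.
    move: FV => /nbhs_ballP[dl /= dl0 ballV]; exists dl => // r /andP[r0 rdl].
    have rball : ball 0%R dl r by rewrite /ball /= sub0r normrN gtr0_norm.
    exact: ballV rball r0.
  have [r rdl phire] := small e dl e0 dl0.
  by apply: ge_ereal_inf; exists (phi r) => //; exists r => //; exact: dlV.
apply: (@le_trans _ _ (ereal_inf (phi @` [set r : R | (0 < r < 1)%R]))).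
  by apply: le_ereal_inf_tmp => _ [r /andP[r0 _] <-]; exact: phi0.
apply: ereal_sup_ubound.
by exists [set r : R | (0 < r < 1)%R] => //; exact: near0.
Unshelve. all: by end_near.
Qed.

(* (r/c)^-g = c^g r^-g: the lower bound [G (r/c) <= F r] costs only a constant
   factor at the radius r/c. *)
Lemma limf_einf_powR_sandwich (F G : R -> \bar R) (c g : R) : (1 <= c)%R ->
  (forall r, (0 < r)%R -> 0 <= G r) ->
  (forall r, (0 < r)%R -> G (r / c)%R <= F r) ->
  (forall r, (0 < r)%R -> F r <= G r) ->
  limf_einf (fun r => (r `^ (- g))%:E * F r) (0%R^'+) = 0 <->
  limf_einf (fun r => (r `^ (- g))%:E * G r) (0%R^'+) = 0.
Proof.
move=> c1 G0 GF FG; have c0 : (0 < c)%R by apply: lt_le_trans c1.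
have F0 r : (0 < r)%R -> 0 <= F r.
  by move=> r0; apply: le_trans (GF r r0); apply: G0; rewrite divr_gt0.
rewrite !limf_einf_at0_eq0P => [| r r0 | r r0]; last 2 first.
- by rewrite mule_ge0 ?lee_fin ?powR_ge0 ?G0.
- by rewrite mule_ge0 ?lee_fin ?powR_ge0 ?F0.
split => small e dl e0 dl0; last first.
  have [r rdl Fre] := small e dl e0 dl0; exists r => //.
  apply: le_trans Fre; apply: lee_wpmul2l; first by rewrite lee_fin powR_ge0.
  by apply: FG; case/andP: rdl.
pose K := (c `^ (- g))%R; have K0 : (0 < K)%R by rewrite powR_gt0.
have [r /andP[r0 rdl] Fre] := small (e * K)%R dl (mulr_gt0 e0 K0) dl0.
exists (r / c)%R.
  rewrite divr_gt0//=; apply: le_lt_trans rdl.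
  by rewrite ler_pdivrMr// ler_peMr// ltW.
have rcE : ((r / c) `^ (- g) = r `^ (- g) / K)%R.
  have -> : (r `^ (- g) = (r / c) `^ (- g) * K)%R.
    by rewrite /K -powRM ?divr_ge0 ?ltW// divfK// gt_eqF.
  by rewrite mulfK// gt_eqF.
apply: (@le_trans _ _ (((r / c) `^ (- g))%:E * F r)).
  by apply: lee_wpmul2l; [rewrite lee_fin powR_ge0|exact: GF].
rewrite rcE EFinM [X in X * F r]muleC -muleA.
apply: (@le_trans _ _ ((K^-1)%:E * (e * K)%:E)).
  by apply: lee_wpmul2l; first by rewrite lee_fin invr_ge0 ltW.
by rewrite -EFinM mulrC mulfK// gt_eqF.
Qed.

End liminf_at_0.

Definition liminf_dim {R : realType} {n : nat} (mu : probability (Rn R n) R)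
    (F : Rn R n -> R -> \bar R) : \bar R :=
  ereal_sup [set g%:E | g in [set g : R |
    {ae mu, forall t, limf_einf (fun r : R => ((r `^ (- g))%:E * F t r)%E)
                        (0^'+) = 0%E}]].

Lemma dimPE {dO} {O : measurableType dO} {R : realType} {n m : nat}
    (P : probability O R) (mu : probability (Rn R n) R)
    (Z : Rn R n -> O -> 'rV[R]_m) :
  dimP P mu Z = liminf_dim mu (fun t r =>
    \int[P]_w mu [set s | (eucl_dist (Z s w) (Z t w) <= r)%R])%E.
Proof. by []. Qed.

Lemma dimHE {dO} {O : measurableType dO} {R : realType} {n d : nat}
    (P : probability O R) (X : 'I_d -> Rn R n -> O -> R)
    (f : Rn R n -> 'rV[R]_d) (mu : probability (Rn R n) R)
    (D : Rn R n -> R -> set (Rn R n)) :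
  dimH P X f mu D =
  liminf_dim mu (fun t r => \int[mu]_(s in D t r) (HXf P X f t s r)%:E)%E.
Proof. by []. Qed.

Lemma liminf_dim_sandwich {R : realType} {n : nat} (mu : probability (Rn R n) R)
    (F G : Rn R n -> R -> \bar R) (c : R) : 1 <= c ->
  (forall t (r : R), 0 < r -> (0 <= G t r)%E) ->
  (forall t (r : R), 0 < r -> (G t (r / c)%R <= F t r)%E) ->
  (forall t (r : R), 0 < r -> (F t r <= G t r)%E) ->
  liminf_dim mu F = liminf_dim mu G.
Proof.
move=> c1 G0 GF FG; rewrite /liminf_dim; congr (ereal_sup (image _ _)).
apply/funext => g /=; apply/propext.
have sw t := limf_einf_powR_sandwich (F t) (G t) c g c1 (G0 t) (GF t) (FG t).
by split; apply: filterS => t /(sw t).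
Qed.

Section integral_off_null.
Context {d : measure_display} {T : measurableType d} {R : realType}.
Variable mu : {measure set T -> \bar R}.
Local Open Scope ereal_scope.

(* The integral of a nonnegative function is a supremum over the simple
   functions below it, so it is monotone without any measurability. *)
Lemma ge0_le_integral_nonmeas (f1 f2 : T -> \bar R) :
  (forall x, 0 <= f1 x) -> (forall x, f1 x <= f2 x) ->
  \int[mu]_x f1 x <= \int[mu]_x f2 x.
Proof.
move=> f10 f12; have f20 x : 0 <= f2 x by exact: le_trans (f10 x) (f12 x).
rewrite !ge0_integralE//; apply: ereal_sup_le => _ [h /= hf1 <-].
exists h => //= x; apply: le_trans (hf1 x) _.
by rewrite /patch /= !ifT ?inE.
Qed.

Variable N : set T.
Hypotheses (mN : measurable N) (muN0 : mu N = 0).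

Lemma le_measure_off_null (A B : set T) : measurable A -> measurable B ->
  (forall x, ~ N x -> A x -> B x) -> mu A <= mu B.
Proof.
move=> mA mB AB; apply: (@le_trans _ _ (mu (B `|` N))); last by rewrite measureU0.
apply: le_measure; rewrite ?inE//; first exact: measurableU.
by move=> x Ax; have [Nx|Nx] := pselect (N x); [right|left; exact: AB].
Qed.

(* [F] need not be measurable: it is squeezed between two measurable
   functions that agree with [G] outside [N]. *)
Lemma ge0_integral_eq_off_null (F G : T -> \bar R) : measurable_fun setT G ->
  (forall x, 0 <= F x) -> (forall x, 0 <= G x) ->
  (forall x, ~ N x -> F x = G x) -> \int[mu]_x F x = \int[mu]_x G x.
Proof.
move=> mG F0 G0 FG.
have mNb : measurable_fun setT (fun x => x \in N).
  apply: (measurable_fun_bool true) => //; rewrite setTI.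
  rewrite (_ : _ @^-1` _ = N)//.
  by apply/seteqP; split => x /=; [move/set_mem|move/mem_set].
pose lo x := if x \in N then 0 else G x.
pose hi x := if x \in N then +oo else G x.
have intG h : measurable_fun setT h -> (forall x, ~ N x -> h x = G x) ->
    \int[mu]_x h x = \int[mu]_x G x.
  move=> mh hG; apply: ae_eq_integral => //; exists N; split => // x /= hGx.
  by apply/not_notP => Nx; apply: hGx => _; exact: hG.
have offN (h0 h1 : \bar R) x : ~ N x -> (if x \in N then h0 else h1) = h1.
  by move=> Nx; rewrite ifF//; apply/negbTE/negP => /set_mem.
apply/eqP; rewrite eq_le; apply/andP; split.
  rewrite -(intG hi) => [||x Nx]; last exact: offN; last exact: measurable_fun_ifT.
  apply: ge0_le_integral_nonmeas => // x; rewrite /hi.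
  by case: (pselect (N x)) => Nx; [rewrite mem_set// leey|rewrite offN// FG].
rewrite -(intG lo) => [||x Nx]; last exact: offN; last exact: measurable_fun_ifT.
apply: ge0_le_integral_nonmeas => x; rewrite /lo; first by case: ifPn.
by case: (pselect (N x)) => Nx; [rewrite mem_set|rewrite offN// FG].
Qed.

End integral_off_null.

Section measurable_rV.
Context {R : realType} {d : measure_display} {T : measurableType d}.

Lemma measurable_le_cst (h : T -> R) a : measurable_fun setT h ->
  measurable [set x | h x <= a].
Proof. by move=> mh; rewrite -preimage_itvNyc -[X in measurable X]setTI; exact: mh. Qed.

Lemma measurable_rV_norm_le {m} (V : T -> 'rV[R]_m) e : 0 <= e ->
  (forall j, measurable_fun setT (fun x => V x 0 j)) ->
  measurable [set x | `|V x| <= e].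
Proof.
move=> e0 mV.
rewrite (_ : [set x | _] = \bigcap_(j in [set: 'I_m]) [set x | `|V x 0 j| <= e]).
  apply: fin_bigcap_measurable => [|j _]; first exact: finite_finset.
  by apply: measurable_le_cst; exact: measurableT_comp (mV j).
by apply/seteqP; split => x /=; rewrite rV_norm_leP// => xe j; [move=> _|]; exact: xe.
Qed.

Lemma measurable_eucl_dist {m} (U V : T -> 'rV[R]_m) :
  (forall j, measurable_fun setT (fun x => U x 0 j)) ->
  (forall j, measurable_fun setT (fun x => V x 0 j)) ->
  measurable_fun setT (fun x => eucl_dist (U x) (V x)).
Proof.
move=> mU mV; apply: measurableT_comp.
  exact: measurable_realfun.continuous_measurable_fun (@sqrt_continuous R).
by apply: measurable_sum => j; apply: measurable_funX; exact: measurable_funB.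
Qed.

Lemma measurable_rV_coordB {m} (U V : T -> 'rV[R]_m) :
  (forall j, measurable_fun setT (fun x => U x 0 j)) ->
  (forall j, measurable_fun setT (fun x => V x 0 j)) ->
  forall j, measurable_fun setT (fun x => (V x - U x) 0 j).
Proof. by move=> mU mV j; under eq_fun do rewrite !mxE; exact: measurable_funB. Qed.

Lemma measurable_row_mx_coord {m1 m2} (U : T -> 'rV[R]_m1) (V : T -> 'rV[R]_m2) :
  (forall j, measurable_fun setT (fun x => U x 0 j)) ->
  (forall j, measurable_fun setT (fun x => V x 0 j)) ->
  forall j, measurable_fun setT (fun x => row_mx (U x) (V x) 0 j).
Proof.
move=> mU mV j; rewrite -(splitK j); case: (fintype.split j) => k /=.
  by under eq_fun do rewrite row_mxEl; exact: mU.
by under eq_fun do rewrite row_mxEr; exact: mV.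
Qed.

Lemma le_measure_eucl_dist_le (nu : {measure set T -> \bar R}) {m}
    (U V : T -> 'rV[R]_m) (r : R) : (0 < m)%N -> 0 < r ->
  (forall j, measurable_fun setT (fun x => U x 0 j)) ->
  (forall j, measurable_fun setT (fun x => V x 0 j)) ->
  (nu [set x | (`|V x - U x| <= r / m%:R)%R] <=
     nu [set x | (eucl_dist (U x) (V x) <= r)%R] <=
     nu [set x | (`|V x - U x| <= r)%R])%E.
Proof.
move=> m0 r0 mU mV.
have mE : measurable [set x | eucl_dist (U x) (V x) <= r].
  by apply: measurable_le_cst; exact: measurable_eucl_dist.
have mM e : 0 <= e -> measurable [set x | `|V x - U x| <= e].
  by move=> e0; apply: measurable_rV_norm_le => //; exact: measurable_rV_coordB.
have m0' : 0 < m%:R :> R by rewrite ltr0n.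
apply/andP; split; apply: le_measure; rewrite ?inE//;
  [exact: mM (divr_ge0 (ltW r0) (ltW m0'))| |exact: mM (ltW r0)|] => x /=.
  move=> Vr; apply: (le_trans (eucl_dist_le_rV_norm (U x) (V x) m0)).
  rewrite distrC; apply: (le_trans (ler_wpM2l (ltW m0') Vr)).
  by rewrite mulrC divfK// gt_eqF.
by apply: le_trans; rewrite distrC; exact: rV_norm_le_eucl_dist.
Qed.

End measurable_rV.

Section caratheodory.
Context {R : realType}.

Lemma rat_rV_dense {n} (s : 'rV[R]_n) e : 0 < e ->
  exists q : 'rV[rat]_n, `|map_mx ratr q - s| < e.
Proof.
move=> e0; have qP (j : 'I_n) : exists q : rat, `|ratr q - s 0 j| < e.
  have /rat_in_itvoo[q] : s 0 j - e < s 0 j + e by rewrite ltrD2l gtrN.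
  by rewrite in_itv /= => /andP[sq qs]; exists q; rewrite ltr_distl sq qs.
have [q qs] := fin_all_exists qP.
by exists (\row_j q j); apply: rV_norm_lt => // j; rewrite !mxE.
Qed.

Lemma continuous_Rn_measurable {n} (g : 'rV[R]_n -> R) : continuous g ->
  measurable_fun setT (g : Rn R n -> R).
Proof.
move=> cg; apply: (measurability (@RGenOInfty.G R)) => [|/= _ [_ [x ->] <-]].
  exact: RGenOInfty.measurableE.
by rewrite setTI; apply: sub_sigma_algebra; apply: open_comp => //; exact: interval_open.
Qed.

Lemma continuous_ge_rat_approxP {n} (h : 'rV[R]_n -> R) (s : 'rV[R]_n) x :
  continuous h ->
  x <= h s <-> forall k : nat, exists q : 'rV[rat]_n,
    x - k.+1%:R^-1 < h (map_mx ratr q) /\ `|map_mx ratr q - s| < k.+1%:R^-1.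
Proof.
move=> ch; split => [xh k | approx].
  have /cvgr_dist_lt/(_ k.+1%:R^-1) := ch s.
  rewrite invr_gt0 ltr0Sn => /(_ isT) /nbhs_ballP[dl /= dl0 dlh].
  have m0 : 0 < Num.min dl k.+1%:R^-1 by rewrite lt_min dl0 invr_gt0 ltr0Sn.
  have [q qs] := rat_rV_dense s _ m0.
  exists q; split; last by rewrite (lt_le_trans qs)// ge_min lexx orbT.
  have /dlh /= : ball s dl (map_mx ratr q).
    by rewrite -ball_normE /= distrC (lt_le_trans qs)// ge_min lexx.
  by rewrite ltr_distl => /andP[]; move: xh; set u := k.+1%:R^-1; lra.
rewrite leNgt; apply/negP => hx.
pose ep := (x - h s) / 2; have ep0 : 0 < ep by rewrite divr_gt0// subr_gt0.
have /cvgr_dist_lt/(_ ep ep0)/nbhs_ballP[dl /= dl0 dlh] := ch s.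
have m1 : 0 < Num.min dl ep by rewrite lt_min dl0 ep0.
have [k _ /(_ k (leqnn k)) /=] := near_infty_natSinv_lt (PosNum m1).
rewrite lt_min => /andP[kdl kep]; have [q [hq qs]] := approx k.
have /dlh /= : ball s dl (map_mx ratr q) by rewrite -ball_normE /= distrC (lt_trans qs).
rewrite ltr_distl => /andP[]; move: hq kep hx; rewrite /ep.
by set u := k.+1%:R^-1; set hq := h (map_mx ratr q); lra.
Qed.

Lemma caratheodory_measurable {dO} {O : measurableType dO} {n}
    (g : O -> Rn R n -> R) :
  (forall w, continuous (fun s : 'rV[R]_n => g w s)) ->
  (forall s, measurable_fun setT (fun w => g w s)) ->
  measurable_fun setT (fun p : O * Rn R n => g p.1 p.2).
Proof.
move=> cg mg.
apply: (measurability (@RGenCInfty.G R)) => [|/= _ [_] [x] -> <-].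
  exact: RGenCInfty.measurableE.
pose A k (q : 'rV[rat]_n) := [set w | x - k.+1%:R^-1 < g w (map_mx ratr q)].
pose B k (q : 'rV[rat]_n) := ball (map_mx ratr q : Rn R n) k.+1%:R^-1.
have -> : [set: O * Rn R n] `&` (fun p => g p.1 p.2) @^-1` `[x, +oo[ =
    \bigcap_k \bigcup_q (A k q `*` B k q).
  apply/seteqP; split => -[w s] /=; rewrite in_itv /= andbT.
    by move=> [_ /(continuous_ge_rat_approxP _ _ _ (cg w))] approx k _;
      have [q [Aq Bq]] := approx k; exists q => //; split; rewrite // /B -ball_normE.
  move=> AB; split => //; apply/(continuous_ge_rat_approxP _ _ _ (cg w)) => k.
  by have [q _ [Aq Bq]] := AB k I; exists q; move: Bq; rewrite /B -ball_normE.
apply: bigcapT_measurable => k; apply: countable_bigcupT_measurable => [|q].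
  exact: countableP.
apply: measurableX.
  by rewrite /A -preimage_itvoy -[X in measurable X]setTI; exact: mg.
by apply: sub_sigma_algebra; apply: ball_open; rewrite invr_gt0.
Qed.

End caratheodory.

Section expected_ball_mass.
Context {R : realType} {dO : measure_display} {O : measurableType dO} {n m : nat}.
Variables (P : probability O R) (mu : probability (Rn R n) R).
Variables (Z Y : Rn R n -> O -> 'rV[R]_m) (N : set O).
Hypotheses (mN : measurable N) (PN0 : P N = 0%E).
Hypothesis ZY : forall w, ~ N w -> forall t, Z t w = Y t w.
Hypothesis mZ : forall t j, measurable_fun setT (fun w => Z t w 0 j).
Hypothesis mY : forall j, measurable_fun setT (fun p : O * Rn R n => Y p.2 p.1 0 j).

Let mYt t j : measurable_fun setT (fun w => Y t w 0 j).
Proof. exact: measurable_fun_pair1 (mY j). Qed.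

Lemma prob_rV_norm_le_off_null t s e : 0 <= e ->
  P [set w | `|Z t w - Z s w| <= e] = P [set w | `|Y t w - Y s w| <= e].
Proof.
move=> e0; have mZ_le : measurable [set w | `|Z t w - Z s w| <= e].
  by apply: measurable_rV_norm_le => //; exact: measurable_rV_coordB.
have mY_le : measurable [set w | `|Y t w - Y s w| <= e].
  by apply: measurable_rV_norm_le => //; exact: measurable_rV_coordB.
apply/eqP; rewrite eq_le; apply/andP.
by split; apply: (le_measure_off_null _ _ mN PN0) => // w Nw /=; rewrite !(ZY _ Nw).
Qed.

Lemma expected_ball_mass_tonelli t r :
  (\int[P]_w mu [set s | (eucl_dist (Z s w) (Z t w) <= r)%R] =
   \int[mu]_s P [set w | (eucl_dist (Y s w) (Y t w) <= r)%R])%E.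
Proof.
pose A := [set p : O * Rn R n | (eucl_dist (Y p.2 p.1) (Y t p.1) <= r)%R].
have mA : measurable A.
  apply: measurable_le_cst; apply: measurable_eucl_dist => j //.
  exact: measurableT_comp (mYt t j) measurable_fst.
have := indic_fubini_tonelli P mu mA.
rewrite indic_fubini_tonelli_FE// indic_fubini_tonelli_GE// => fubini.
transitivity (\int[P]_w (mu \o xsection A) w)%E.
  apply: (ge0_integral_eq_off_null _ _ mN PN0) => //.
    exact: measurable_fun_xsection.
  move=> w Nw /=; congr (mu _); apply/seteqP; split => s /=;
    by rewrite /xsection /= inE /A /= !(ZY _ Nw).
rewrite fubini; apply: eq_integral => s _ /=; congr (P _).
by apply/seteqP; split => w /=; rewrite /ysection /= inE.
Qed.

Lemma dimP_maxnorm (G : Rn R n -> R -> \bar R) : (0 < m)%N ->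
  (forall t (r : R), 0 < r ->
    G t r = (\int[mu]_s P [set w | (`|Z t w - Z s w| <= r)%R])%E) ->
  dimP P mu Z = liminf_dim mu G.
Proof.
move=> m0 GE; rewrite dimPE; apply: (liminf_dim_sandwich mu _ G m%:R).
- by rewrite ler1n.
- by move=> t r r0; rewrite GE//; apply: integral_ge0.
- move=> t r r0; rewrite GE ?divr_gt0 ?ltr0n// expected_ball_mass_tonelli.
  apply: ge0_le_integral_nonmeas => // s.
  rewrite prob_rV_norm_le_off_null; last exact: divr_ge0 (ltW r0) (ler0n _ _).
  by have /andP[] := le_measure_eucl_dist_le P (Y s) (Y t) r m0 r0 (mYt s) (mYt t).
- move=> t r r0; rewrite GE// expected_ball_mass_tonelli.
  apply: ge0_le_integral_nonmeas => // s.
  rewrite prob_rV_norm_le_off_null; last exact: ltW.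
  by have /andP[] := le_measure_eucl_dist_le P (Y s) (Y t) r m0 r0 (mYt s) (mYt t).
Qed.

End expected_ball_mass.

Lemma gaussian_field_measurable {R : realType} {dO} {O : measurableType dO} {n d}
    {P : probability O R} {X : 'I_d -> Rn R n -> O -> R} :
  gaussian_field P X -> forall i t, measurable_fun setT (X i t).
Proof.
move=> gX i t; have [m [sd [mXit _]]] := gX [:: (i, t, 1)].
by move: mXit; under eq_fun do rewrite big_seq1 /= mul1r.
Qed.

Section random_field.
Context {R : realType} {dO : measure_display} {O : measurableType dO} {n d : nat}.
Variables (P : probability O R) (X : 'I_d -> Rn R n -> O -> R) (f : Rn R n -> 'rV[R]_d).

Hypothesis mX : forall i t, measurable_fun setT (X i t).

Lemma measurable_Xf_coord t j : measurable_fun setT (fun w => Xf X f t w 0 j).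
Proof. by under eq_fun do rewrite mxE; exact: measurable_funD. Qed.

Lemma measurable_graphXf_coord t j :
  measurable_fun setT (fun w => graphXf X f t w 0 j).
Proof. by apply: measurable_row_mx_coord => // k; exact: measurable_Xf_coord. Qed.

Lemma HXfE t s r : 0 <= r ->
  (HXf P X f t s r)%:E = P [set w | `|Xf X f t w - Xf X f s w| <= r].
Proof.
move=> r0; rewrite /HXf fineK//; apply: fin_num_measure.
by apply: measurable_rV_norm_le => //; apply: measurable_rV_coordB => j;
  exact: measurable_Xf_coord.
Qed.

Lemma prob_graphXf_le t s r : 0 <= r ->
  P [set w | `|graphXf X f t w - graphXf X f s w| <= r] =
  ((fun s => (HXf P X f t s r)%:E) \_ (Dball t r)) s.
Proof.
move=> r0; have graphB w : graphXf X f t w - graphXf X f s w =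
    row_mx ((t : 'rV[R]_n) - s) (Xf X f t w - Xf X f s w).
  by rewrite /graphXf opp_row_mx add_row_mx.
rewrite patchE; case: ifPn => [/set_mem tsr | /negP tsr].
  rewrite HXfE//; congr (P _); apply/seteqP; split => w /=;
    rewrite graphB row_mx_norm_leP//; first by case.
  by split => //; rewrite distrC.
rewrite (_ : [set w | _] = set0) ?measure0//; apply/seteqP; split => w //=.
rewrite graphB row_mx_norm_leP// => -[st _]; apply: tsr; apply/mem_set.
by rewrite /Dball /= distrC.
Qed.

End random_field.

Section continuous_modification.
Context {R : realType} {dO : measure_display} {O : measurableType dO} {n d : nat}.
Variables (X : 'I_d -> Rn R n -> O -> R) (N : set O).
Hypotheses (mN : measurable N) (mX : forall i t, measurable_fun setT (X i t)).
Hypothesis cX : forall w, ~ N w -> forall i, continuous (fun t : 'rV[R]_n => X i t w).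

Definition cont_modif i t w := X i t w * \1_(~` N) w.

Lemma cont_modif_eq w : ~ N w -> forall i t, X i t w = cont_modif i t w.
Proof. by move=> Nw i t; rewrite /cont_modif indicE mem_set// mulr1. Qed.

Lemma measurable_cont_modif i t : measurable_fun setT (cont_modif i t).
Proof. by apply: measurable_funM => //; apply: measurable_indic; exact: measurableC. Qed.

Lemma continuous_cont_modif w i : continuous (fun t : 'rV[R]_n => cont_modif i t w).
Proof.
rewrite /cont_modif indicE; have [Nw|Nw] := pselect (N w).
  by rewrite memNset//; under eq_fun do rewrite mulr0; exact: cst_continuous.
by rewrite mem_set//; under eq_fun do rewrite mulr1; exact: cX.
Qed.

Variables (f : Rn R n -> 'rV[R]_d).
Hypothesis mf : borel_map f.

Lemma Xf_cont_modif_eq w : ~ N w -> forall t, Xf X f t w = Xf cont_modif f t w.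
Proof. by move=> Nw t; apply/rowP => j; rewrite !mxE cont_modif_eq. Qed.

Lemma graphXf_cont_modif_eq w : ~ N w ->
  forall t, graphXf X f t w = graphXf cont_modif f t w.
Proof. by move=> Nw t; rewrite /graphXf Xf_cont_modif_eq. Qed.

Lemma measurable_Xf_cont_modif j :
  measurable_fun setT (fun p : O * Rn R n => Xf cont_modif f p.2 p.1 0 j).
Proof.
under eq_fun do rewrite mxE; apply: measurable_funD.
  exact: (caratheodory_measurable (fun w s => cont_modif j s w)
    (continuous_cont_modif ^~ j) (measurable_cont_modif j)).
exact: measurableT_comp (mf j) measurable_snd.
Qed.

Lemma measurable_graphXf_cont_modif j :
  measurable_fun setT (fun p : O * Rn R n => graphXf cont_modif f p.2 p.1 0 j).
Proof.
apply: (measurable_row_mx_coord (fun p : O * Rn R n => p.2 : 'rV[R]_n))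
  => [k|]; last exact: measurable_Xf_cont_modif.
have mk : measurable_fun setT (fun s : Rn R n => (s : 'rV[R]_n) 0 k).
  exact: continuous_Rn_measurable (@coord_continuous R 1 n 0 k).
exact: measurableT_comp mk measurable_snd.
Qed.

End continuous_modification.

Theorem corollary3p8 (R : realType) (dO : measure_display) (O : measurableType dO)
  (P : probability O R) (n d : nat)
  (X : 'I_d -> Rn R n -> O -> R) (f : Rn R n -> 'rV[R]_d)
  (A : set (Rn R n)) (mu : probability (Rn R n) R) :
  (0 < n)%N -> (0 < d)%N ->
  gaussian_field P X -> indep_coords P X -> centered_field P X ->
  as_continuous P X -> borel_map f -> analytic_set A -> regular_on P X A ->
  in_Pc A mu ->
  dimP P mu (Xf X f) = dimH P X f mu (fun _ _ => setT) /\
  dimP P mu (graphXf X f) = dimH P X f mu Dball.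
Proof.
move=> n0 d0 gX _ _ [N [mN PN0 cXN]] mf _ _ _.
have mX := gaussian_field_measurable gX.
have cX w : ~ N w -> forall i, continuous (fun t : 'rV[R]_n => X i t w).
  by move=> Nw; apply/not_notP => /cXN.
rewrite !dimHE; split.
- apply: (dimP_maxnorm P mu _ _ N mN PN0 (Xf_cont_modif_eq X N f)) => //.
  + exact: measurable_Xf_coord.
  + exact: measurable_Xf_cont_modif.
  + move=> t r r0 /=; apply: eq_integral => s _.
    by rewrite (HXfE P X f mX t s r (ltW r0)).
- apply: (dimP_maxnorm P mu _ _ N mN PN0 (graphXf_cont_modif_eq X N f)).
  + exact: measurable_graphXf_coord.
  + exact: measurable_graphXf_cont_modif.
  + by rewrite addn_gt0 n0.
  + move=> t r r0 /=; rewrite integral_mkcond; apply: eq_integral => s _.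
    by rewrite (prob_graphXf_le P X f mX t s r (ltW r0)).
Qed.
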